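(* Let $G\le S_n$ be fusion controlled and $T\in\mathcal T(G_0)$. (i) For every connected component $C$ of $\widetilde P_0(G)$ containing at least one vertex of type $T$, the number of components of $\widetilde P_0(G)$ containing at least one vertex of type $T$ equals $\dfrac{\mu_T(G)}{\phi(o(T))\,k_C(T)}$. (ii) If $T$ is isolated in $P_0(\mathcal T(G))$, this number equals $\dfrac{\mu_T(G)}{\phi(o(T))}$.
   Context: $G_0=G\setminus\{1\}$; $[x]=\{y:\langle y\rangle=\langle x\rangle\}$; $\widetilde P_0(G)$: vertex set $\{[x]:x\in G_0\}$, distinct $[x],[y]$ adjacent iff some representatives are one a positive power of the other. For $\psi\in S_n$, $T_\psi$ is the partition of $n$ given by orbit lengths of $\langle\psi\rangle$; the type of $[\psi]$ is $T_\psi$. For $T=[m_1^{t_1},\dots,m_k^{t_k}]$, $o(T)=\mathrm{lcm}(m_i)$ and $T^a=[(m_i/\gcd(a,m_i))^{t_i\gcd(a,m_i)}]_i$. $\mathcal T(G_0)=\{T_\psi:\psi\in G_0\}$; $P_0(\mathcal T(G))$: vertex set $\mathcal T(G_0)$, distinct $T,T'$ adjacent iff one is a power of the other. $\mu_T(G)$ is the number of elements of $G$ of type $T$; $\phi$ is Euler's totient; $k_C(T)$ is the number of vertices of $C$ of type $T$. $G$ is fusion controlled if for all $\psi\in G$, $x\in S_n$ with $x^{-1}\psi x\in G$ there is $y\in N_{S_n}(G)$ with $x^{-1}\psi x=y^{-1}\psi y$. *)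

From HB Require Import structures.
From mathcomp Require Import all_boot all_order all_fingroup all_solvable.
Set Implicit Arguments. Unset Strict Implicit. Unset Printing Implicit Defensive.

Local Open Scope group_scope.

Section Defs.
Variable n : nat.
Local Notation gT := {perm 'I_n}.

(* The type T_psi: multiset (sorted list) of orbit lengths of <psi> on {0..n-1},
   fixed points counted as orbits of length 1. *)
Definition ptype (psi : gT) : seq nat :=
  sort leq [seq #|X| | X : {set 'I_n} <- enum (porbits psi)].

Definition tord (T : seq nat) : nat := foldr lcmn 1%N T.

Definition tpow (T : seq nat) (a : nat) : seq nat :=
  sort leq (flatten [seq nseq (gcdn a m) (m %/ gcdn a m) | m <- T]).

Definition pclass (x : gT) : {set gT} := [set y | <[y]> == <[x]>].

Definition pverts (G : {group gT}) : {set {set gT}} := [set pclass x | x in G^#].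

(* b is a positive power of a (powers a^1 .. a^#|gT| cover all positive powers) *)
Definition ppow (a b : gT) : bool := [exists k : 'I_#|gT|, b == a ^+ k.+1].

Definition padj (G : {group gT}) : rel {set gT} := fun X Y =>
  [&& X \in pverts G, Y \in pverts G, X != Y &
      [exists a in X, exists b in Y, ppow a b || ppow b a]].

Definition pcomp (G : {group gT}) (v : {set gT}) : {set {set gT}} :=
  [set w in pverts G | connect (padj G) v w].

Definition pcomps (G : {group gT}) : {set {set {set gT}}} :=
  [set pcomp G v | v in pverts G].

(* type of a vertex [x] (well defined: all elements of [x] have the same type) *)
Definition vtype (v : {set gT}) : seq nat := ptype (repr v).

Definition ncompT (G : {group gT}) (T : seq nat) : nat :=
  #|[set C in pcomps G | [exists v in C, vtype v == T]]|.

Definition kC (C : {set {set gT}}) (T : seq nat) : nat :=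
  #|[set v in C | vtype v == T]|.

Definition muT (G : {group gT}) (T : seq nat) : nat :=
  #|[set x in G | ptype x == T]|.

Definition types0 (G : {group gT}) : seq (seq nat) :=
  [seq ptype x | x in G^#].

Definition type_isolated (G : {group gT}) (T : seq nat) : Prop :=
  forall T', T' \in types0 G -> T' != T ->
    ~ (exists a, T' = tpow T a) /\ ~ (exists a, T = tpow T' a).

Definition fusion_controlled (G : {group gT}) : Prop :=
  forall (psi x : gT), psi \in G -> psi ^ x \in G ->
    exists2 y, y \in 'N(G) & psi ^ x = psi ^ y.

End Defs.

From Pilot Require Import Defs.
From HB Require Import structures.
From mathcomp Require Import all_boot all_order all_fingroup all_solvable.
Set Implicit Arguments. Unset Strict Implicit. Unset Printing Implicit Defensive.

(* Two permutations with the same cycle type are conjugate in S_n, so by fusion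
   control two elements of G of type T are conjugate by some y in N_{S_n}(G).
   Conjugation by y is an automorphism of the power graph preserving types, hence
   all components meeting type T contain the same number k_C(T) of type-T
   vertices. Counting the type-T vertices component by component gives
   ncompT * k_C(T), and each vertex [x] consists of the phi(o(x)) generators of
   <x>, which gives mu_T. If T is isolated, a type-T vertex has no neighbour: the
   type of a power of x is a power of the type of x, and when the types agree the
   two elements generate the same cyclic group; so k_C(T) = 1. *)

Lemma fibre_matching (U : finType) (V : eqType) (w : U -> V) (A A' : {set U}) :
  (forall v, #|[set a in A | w a == v]| = #|[set a in A' | w a == v]|) ->
  exists2 f : U -> U, {in A, forall a, f a \in A' /\ w (f a) = w a}
                    & {in A &, injective f}.
Proof.
move=> eq_fib; pose fib (S : {set U}) a := enum [set b in S | w b == w a].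
have fibE S a b : (b \in fib S a) = (b \in S) && (w b == w a).
  by rewrite mem_enum inE.
have size_fib a : size (fib A a) = size (fib A' a) by rewrite -!cardE eq_fib.
pose f a := nth a (fib A' a) (index a (fib A a)).
have idx_lt a : a \in A -> index a (fib A a) < size (fib A' a).
  by move=> aA; rewrite -size_fib index_mem fibE aA eqxx.
have f_fib a : a \in A -> f a \in fib A' a by move=> aA; rewrite mem_nth ?idx_lt.
have wf a : a \in A -> w (f a) = w a.
  by move=> /f_fib; rewrite fibE => /andP[_ /eqP].
exists f => [a aA | a c aA cA fac].
  by have := f_fib a aA; rewrite fibE => /andP[-> /eqP].
have Efib S : fib S a = fib S c by rewrite /fib -wf // fac wf.
have a_fib : a \in fib A c by rewrite -Efib fibE aA eqxx.
have lt_a : index a (fib A c) < size (fib A' c) by rewrite -!Efib idx_lt.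
move: fac; rewrite /f !Efib [nth c _ _](set_nth_default a) ?idx_lt // => /eqP.
rewrite nth_uniq ?enum_uniq ?idx_lt // => /eqP eq_idx.
by rewrite -(nth_index a a_fib) eq_idx nth_index // fibE cA eqxx.
Qed.

Lemma dvdn_mul_divgcd m k j : 0 < m -> (m %| k * j) = (m %/ gcdn k m %| j).
Proof.
move=> m_gt0; rewrite dvdn_divLR ?dvdn_gcdr ?gcdn_gt0 ?m_gt0 ?orbT //.
by rewrite mulnC muln_gcdr dvdn_gcd (dvdn_mull j (dvdnn m)) andbT mulnC.
Qed.

Lemma count_sort_leq (s : seq nat) m : count_mem m (sort leq s) = count_mem m s.
Proof. by have /seq.permP := permEl (perm_sort leq s); apply. Qed.

Lemma sort_leq_countP (s1 s2 : seq nat) :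
  reflect (forall m, count_mem m (sort leq s1) = count_mem m (sort leq s2))
          (sort leq s1 == sort leq s2).
Proof.
apply: (iffP eqP) => [-> // | eq_count].
apply/perm_sortP; [exact: leq_total | exact: leq_trans | exact: anti_leq |].
by apply/allP => m _ /=; rewrite -(count_sort_leq s1) -(count_sort_leq s2) eq_count.
Qed.

Section PermOrbits.
Local Open Scope group_scope.
Variable T : finType.
Implicit Types s : {perm T}.

Lemma porbit_gt0 s x : (0 < #|porbit s x|)%N.
Proof. by rewrite lt0n card_porbit_neq0. Qed.

Lemma permX_modn s x i : (s ^+ i) x = (s ^+ (i %% #|porbit s x|)) x.
Proof.
have iter_mul q : iter (q * #|porbit s x|) s x = x.
  by elim: q => // q IHq; rewrite mulSn iterD IHq iter_porbit.
by rewrite !permX {1}(divn_eq i #|porbit s x|) addnC iterD iter_mul.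
Qed.

Lemma eq_permX_porbit s x i j :
  ((s ^+ i) x == (s ^+ j) x) = (i == j %[mod #|porbit s x|]).
Proof.
rewrite [in LHS]permX_modn [(s ^+ j) x]permX_modn !permX.
rewrite -!(nth_traject _ (ltn_pmod _ (porbit_gt0 s x))).
by rewrite nth_uniq ?size_traject ?ltn_pmod ?porbit_gt0 ?uniq_traject_porbit.
Qed.

Lemma permX_eq_id s x j : ((s ^+ j) x == x) = (#|porbit s x| %| j)%N.
Proof. by have := eq_permX_porbit s x j 0; rewrite expg0 perm1 => ->; rewrite mod0n. Qed.

Lemma card_porbitX s k x :
  #|porbit (s ^+ k) x| = (#|porbit s x| %/ gcdn k #|porbit s x|)%N.
Proof.
have dvd_card j : (#|porbit (s ^+ k) x| %| j)%N =
                  (#|porbit s x| %/ gcdn k #|porbit s x| %| j)%N.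
  by rewrite -permX_eq_id -expgM permX_eq_id dvdn_mul_divgcd ?porbit_gt0.
by apply/eqP; rewrite eqn_dvd dvd_card dvdnn -dvd_card dvdnn.
Qed.

Lemma porbitX_sub s k x : porbit (s ^+ k) x \subset porbit s x.
Proof. by apply/subsetP => y /porbitP[i ->]; rewrite -expgM mem_porbit. Qed.

Lemma porbit_conjg s y x : porbit (s ^ y) (y x) = y @: porbit s x.
Proof.
have conjX i : ((s ^ y) ^+ i) (y x) = y ((s ^+ i) x) by rewrite -conjXg conjgE !permM permK.
apply/setP => z; apply/porbitP/imsetP => [[i ->] | [_ /porbitP[i ->] ->]].
  by exists ((s ^+ i) x); rewrite ?mem_porbit ?conjX.
by exists i; rewrite conjX.
Qed.

Lemma porbits_conjg s y : porbits (s ^ y) = [set y @: X | X : {set T} in porbits s].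
Proof.
apply/setP => Z; apply/imsetP/imsetP => [[x _ ->] | [_ /imsetP[x _ ->] ->]].
  by exists (porbit s (y^-1 x)); rewrite ?imset_f // -porbit_conjg permKV.
by exists (y x); rewrite ?porbit_conjg.
Qed.

Definition ncycles s m := #|[set X in porbits s | #|X| == m]|.

Lemma ncycles_conjg s y m : ncycles (s ^ y) m = ncycles s m.
Proof.
have card_y (X : {set T}) : #|y @: X| = #|X| by apply/card_imset/perm_inj.
have inj_y : injective (fun X : {set T} => y @: X) by apply/imset_inj/perm_inj.
rewrite /ncycles porbits_conjg -[RHS](card_imset _ inj_y); apply: eq_card => Z.
apply/setIdP/imsetP => [[/imsetP[X sX ->] cardX] | [X]].
  by exists X; rewrite // inE sX -card_y.
by rewrite inE => /andP[sX cardX] ->; rewrite imset_f // card_y.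
Qed.

Section Conjugator.
Variables (x0 : T) (s t : {perm T}) (f : {set T} -> {set T}).
Hypothesis f_porbits : {in porbits s, forall X, f X \in porbits t /\ #|f X| = #|X|}.
Hypothesis f_inj : {in porbits s &, injective f}.

Let base (X : {set T}) := odflt x0 [pick y in X].

Let porbit_base u x : porbit u (base (porbit u x)) = porbit u x.
Proof.
by apply/eqP; rewrite eq_porbit_mem /base; case: pickP => [// | /(_ x)]; rewrite porbit_id.
Qed.

Let porbits_base u X : X \in porbits u -> porbit u (base X) = X.
Proof. by case/imsetP=> x _ ->; apply: porbit_base. Qed.

Let expo x := index x (traject s (base (porbit s x)) #|porbit s x|).

Let expoK x : (s ^+ expo x) (base (porbit s x)) = x.
Proof.
have x_traj : x \in traject s (base (porbit s x)) #|porbit s x|.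
  by rewrite -[in X in traject _ _ X]porbit_base -porbit_traject porbit_base porbit_id.
have lt_expo : expo x < #|porbit s x| by rewrite -index_mem size_traject in x_traj.
by rewrite permX -(nth_traject _ lt_expo) nth_index.
Qed.

Let porbit_in x : porbit s x \in porbits s. Proof. exact: imset_f. Qed.

(* The i-th point of the s-cycle X, counted from its base point, goes to the
   i-th point of the t-cycle f X. *)
Definition conjugator x := (t ^+ expo x) (base (f (porbit s x))).

Let f_porbit x : porbit t (base (f (porbit s x))) = f (porbit s x).
Proof. by apply: porbits_base; case: (f_porbits (porbit_in x)). Qed.

Let card_f_porbit x : #|porbit t (base (f (porbit s x)))| = #|porbit s (base (porbit s x))|.
Proof. by rewrite f_porbit porbit_base; case: (f_porbits (porbit_in x)). Qed.

Lemma conjugator_permX x k :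
  conjugator ((s ^+ k) (base (porbit s x))) = (t ^+ k) (base (f (porbit s x))).
Proof.
set y := (s ^+ k) _; have Xy : porbit s y = porbit s x by rewrite porbit_perm porbit_base.
apply/eqP; rewrite /conjugator Xy eq_permX_porbit card_f_porbit -eq_permX_porbit.
by rewrite -[in X in (s ^+ expo y) X]Xy expoK.
Qed.

Lemma conjugatorM x : conjugator (s x) = t (conjugator x).
Proof.
by rewrite -{1}(expoK x) -permM -expgSr conjugator_permX expgSr permM.
Qed.

Lemma conjugator_inj : injective conjugator.
Proof.
have porbit_conj x : porbit t (conjugator x) = f (porbit s x).
  by rewrite porbit_perm f_porbit.
move=> x x' eq_xx'.
have eqX : porbit s x = porbit s x'.
  by apply: f_inj; rewrite ?imset_f // -!porbit_conj eq_xx'.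
rewrite -(expoK x) -(expoK x') -eqX; apply/eqP; rewrite eq_permX_porbit -card_f_porbit.
by rewrite -eq_permX_porbit; move: eq_xx'; rewrite /conjugator eqX => ->.
Qed.

End Conjugator.

Lemma ncycles_conjP s t : (forall m, ncycles s m = ncycles t m) -> exists y, s ^ y = t.
Proof.
move=> eq_ncycles; case: (pickP (@predT T)) => [x0 _ | T0]; last first.
  by exists 1; apply/permP => x; have := T0 x.
have [f f_porbits f_inj] := @fibre_matching _ _ (fun X : {set T} => #|X|) _ _ eq_ncycles.
pose y := perm (@conjugator_inj x0 s t f f_porbits f_inj).
exists y; apply/permP => x.
by rewrite -[x](permKV y) conjgE !permM permK !permE conjugatorM.
Qed.

End PermOrbits.

Section PermPower.
Local Open Scope group_scope.
Variables (T : finType) (s : {perm T}) (k : nat).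

Let porbit_mem x y : y \in porbit s x -> porbit s y = porbit s x.
Proof. by move=> yx; apply/eqP; rewrite eq_porbit_mem. Qed.

Let card_porbitX_in x y : y \in porbit s x ->
  #|porbit (s ^+ k) y| = (#|porbit s x| %/ gcdn k #|porbit s x|)%N.
Proof. by move=> yx; rewrite card_porbitX (porbit_mem yx). Qed.

Lemma card_porbitsX_in x :
  #|[set porbit (s ^+ k) y | y in porbit s x]| = gcdn k #|porbit s x|.
Proof.
set m := #|porbit s x|; have m_gt0 : (0 < m)%N := porbit_gt0 s x.
have acts_sk : [acts <[s ^+ k]>, on porbit s x | 'P].
  by apply: subset_trans (cycleX s k) _; rewrite porbitE acts_orbit ?subsetT.
have := acts_sum_card_orbit acts_sk; rewrite -porbitE.
rewrite (eq_bigr (fun=> m %/ gcdn k m)%N) => [|_ /imsetP[y yx ->]]; last first.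
  exact: card_porbitX_in.
rewrite sum_nat_const -/m => card_m.
have d_gt0 : (0 < m %/ gcdn k m)%N.
  by rewrite -card_porbitX porbit_gt0.
by apply/eqP; rewrite -(eqn_pmul2r d_gt0) card_m mulnC divnK // dvdn_gcdr.
Qed.

Let porbitsX_sub x Y :
  (Y \in porbits (s ^+ k)) && (Y \subset porbit s x) =
  (Y \in [set porbit (s ^+ k) y | y in porbit s x]).
Proof.
apply/andP/imsetP => [[/imsetP[y _ ->] sub_yx] | [y yx ->]].
  by exists y; rewrite // (subsetP sub_yx) ?porbit_id.
by rewrite imset_f // -(porbit_mem yx) porbitX_sub.
Qed.

Lemma ncycles_expg c :
  ncycles (s ^+ k) c = (\sum_(X in porbits s) (#|X| %/ gcdn k #|X| == c) * gcdn k #|X|)%N.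
Proof.
rewrite /ncycles -sum1_card.
transitivity (\sum_(Y in [set Y in porbits (s ^+ k) | #|Y| == c])
                \sum_(X in porbits s | Y \subset X) 1)%N.
  apply: eq_bigr => _ /setIdP[/imsetP[y _ ->] _].
  rewrite sum1_card -(cards1 (porbit s y)); apply: eq_card => X; rewrite inE.
  apply/eqP/andP => [-> | [/imsetP[x _ ->] sub_yx]]; first by rewrite imset_f ?porbitX_sub.
  by apply/esym/porbit_mem; rewrite (subsetP sub_yx) ?porbit_id.
rewrite (exchange_big_dep (mem (porbits s))) /=; last by move=> Y X _ /andP[].
apply: eq_bigr => _ /imsetP[x _ ->].
have card_sub Y : Y \in [set porbit (s ^+ k) y | y in porbit s x] ->
    #|Y| = #|porbit (s ^+ k) x|.
  by case/imsetP=> y yx ->; rewrite (card_porbitX_in yx) card_porbitX.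
rewrite sum1_card -card_porbitX -card_porbitsX_in.
case: eqP => [<- | ne_c]; rewrite ?mul1n ?mul0n.
  apply: eq_card => Y; rewrite unfold_in /= !inE imset_f //= andbAC porbitsX_sub.
  by case: (boolP (Y \in _)) => //= /card_sub ->; rewrite eqxx.
apply: eq_card0 => Y; rewrite unfold_in /= !inE imset_f //= andbAC porbitsX_sub.
by apply/negP => /andP[/card_sub -> /eqP].
Qed.

End PermPower.

Section CycleType.
Local Open Scope group_scope.
Variable n : nat.
Implicit Types x y z : {perm 'I_n}.

Lemma big_ptype x (P : pred nat) (F : nat -> nat) :
  \sum_(m <- ptype x | P m) F m = \sum_(X in porbits x | P #|X|) F #|X|.
Proof. by rewrite /ptype (perm_big _ (permEl (perm_sort leq _))) big_map big_enum_cond. Qed.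

Lemma count_ptype x m : count_mem m (ptype x) = ncycles x m.
Proof. by rewrite -sum1_count big_ptype sum1_card; apply: eq_card => X; rewrite !inE. Qed.

Lemma ptype_eqP x z : reflect (forall m, ncycles x m = ncycles z m) (ptype x == ptype z).
Proof.
by apply: (iffP (sort_leq_countP _ _)) => eq_count m; have := eq_count m;
  rewrite -?(count_ptype x) -?(count_ptype z); apply.
Qed.

Lemma ptype_conjg x y : ptype (x ^ y) = ptype x.
Proof. by apply/eqP/ptype_eqP => m; apply: ncycles_conjg. Qed.

Lemma ptype_conjP x z : ptype x = ptype z -> exists y, x ^ y = z.
Proof. by move/eqP/ptype_eqP; apply: ncycles_conjP. Qed.

Lemma all_ptype x (P : pred nat) : all P (ptype x) = [forall i, P #|porbit x i|].
Proof.
rewrite /ptype all_sort all_map; apply/allP/forallP => [P_x i | P_x X].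
  by apply: (P_x (porbit x i)); rewrite mem_enum imset_f.
by rewrite mem_enum => /imsetP[i _ ->]; apply: P_x.
Qed.

Lemma tord_ptype x : tord (ptype x) = #[x].
Proof.
have tord_dvdn (s : seq nat) k : (tord s %| k)%N = all (dvdn^~ k) s.
  by elim: s => [|m s IHs] /=; rewrite ?dvd1n // dvdn_lcm IHs.
have dvd_tord k : (tord (ptype x) %| k)%N = (#[x] %| k)%N.
  rewrite tord_dvdn all_ptype order_dvdn; apply/forallP/eqP => [fix_i | xk1 i].
    by apply/permP => i; rewrite perm1; apply/eqP; rewrite permX_eq_id fix_i.
  by rewrite -permX_eq_id xk1 perm1.
by apply/eqP; rewrite eqn_dvd dvd_tord dvdnn -dvd_tord dvdnn.
Qed.

Lemma ptype_cycle x y : <[y]> = <[x]> -> ptype y = ptype x.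
Proof.
move=> eq_xy; have eq_porbit : porbit y =1 porbit x by move=> i; rewrite porbit.unlock eq_xy.
by rewrite /ptype /porbits (eq_imset _ eq_porbit).
Qed.

Lemma ptype_expg x k : ptype (x ^+ k) = tpow (ptype x) k.
Proof.
apply/eqP/sort_leq_countP => c; rewrite -[sort leq _]/(ptype (x ^+ k)) count_ptype.
rewrite count_sort_leq count_flatten sumnE !big_map big_ptype ncycles_expg.
by apply: eq_big => [X | X _]; rewrite ?andbT ?count_nseq.
Qed.

End CycleType.

Section PowerGraph.
Local Open Scope group_scope.
Variable n : nat.
Local Notation gT := {perm 'I_n}.
Implicit Types (a b x y z : gT) (v w : {set gT}).

Lemma mem_pclass x z : (z \in pclass x) = (<[z]> == <[x]>).
Proof. by rewrite inE. Qed.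

Lemma pclass_id x : x \in pclass x.
Proof. by rewrite mem_pclass. Qed.

Lemma eq_pclass x z : z \in pclass x -> pclass z = pclass x.
Proof. by rewrite mem_pclass => /eqP eq_xz; apply/setP => u; rewrite !mem_pclass eq_xz. Qed.

Lemma ptype_pclass x z : z \in pclass x -> ptype z = ptype x.
Proof. by rewrite mem_pclass => /eqP; apply: ptype_cycle. Qed.

Lemma vtype_pclass x : vtype (pclass x) = ptype x.
Proof. exact/ptype_pclass/mem_repr/pclass_id. Qed.

Lemma card_pclass x : #|pclass x| = totient (tord (ptype x)).
Proof.
by rewrite tord_ptype totient_gen; apply: eq_card => z; rewrite !inE /generator eq_sym.
Qed.

Lemma pclassJ x y : pclass (x ^ y) = pclass x :^ y.
Proof.
apply/setP => z; rewrite mem_conjg !mem_pclass !cycleJ.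
by rewrite -[in LHS](inj_eq (@conjsg_inj _ y^-1)) conjsgK.
Qed.

Lemma ppowJ a b y : ppow (a ^ y) (b ^ y) = ppow a b.
Proof. by apply: eq_existsb => k; rewrite -conjXg (inj_eq (@conjg_inj _ y)). Qed.

Lemma ptype_ppow a b : ppow a b -> exists k, ptype b = tpow (ptype a) k.
Proof. by case/existsP=> k /eqP ->; exists k.+1; rewrite ptype_expg. Qed.

Lemma ppow_cycle a b : ppow a b -> #[a] = #[b] -> <[a]> = <[b]>.
Proof.
case/existsP=> k /eqP b_ak oab; apply/eqP; rewrite eq_sym eqEcard cycle_subG b_ak.
by rewrite mem_cycle /= -b_ak; apply: eq_leq oab.
Qed.

Variable G : {group gT}.

Lemma pclass_subG x : x \in G -> pclass x \subset G.
Proof.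
by move=> xG; apply/subsetP => z; rewrite mem_pclass -cycle_subG => /eqP ->; rewrite cycle_subG.
Qed.

Lemma pvertsJ v y : y \in 'N(G) -> (v :^ y \in pverts G) = (v \in pverts G).
Proof.
suff pvertsJ1 u z : z \in 'N(G) -> u \in pverts G -> u :^ z \in pverts G.
  move=> yN; apply/idP/idP => [/(pvertsJ1 _ _ (groupVr yN)) | /pvertsJ1->//].
  by rewrite conjsgK.
move=> zN /imsetP[x xG ->]; rewrite -pclassJ imset_f //.
by move: xG; rewrite !inE conjg_eq1 memJ_norm.
Qed.

Lemma vtypeJ v y : v \in pverts G -> vtype (v :^ y) = vtype v.
Proof. by case/imsetP=> x _ ->; rewrite -pclassJ !vtype_pclass ptype_conjg. Qed.

Lemma padjJ v w y : y \in 'N(G) -> padj G (v :^ y) (w :^ y) = padj G v w.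
Proof.
move=> yN; rewrite /padj !pvertsJ // (inj_eq (@conjsg_inj _ y)); do 3!congr andb.
apply/exists_inP/exists_inP => [[_ /imsetP[a av ->] /exists_inP[_ /imsetP[b bw ->]]] | [a av /exists_inP[b bw]]].
  by rewrite !ppowJ => ab; exists a => //; apply/exists_inP; exists b.
rewrite -(ppowJ _ _ y) -(ppowJ b a y) => ab.
by exists (a ^ y); rewrite ?memJ_conjg //; apply/exists_inP; exists (b ^ y); rewrite ?memJ_conjg.
Qed.

Lemma padj_sym : symmetric (padj G).
Proof.
suff padj_sym1 v w : padj G v w -> padj G w v by move=> v w; apply/idP/idP; apply: padj_sym1.
case/and4P=> vV wV vw /existsP[a /andP[av /existsP[b /andP[bw ab]]]].
rewrite /padj wV vV eq_sym vw; apply/existsP; exists b; rewrite bw.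
by apply/existsP; exists a; rewrite av orbC.
Qed.

Lemma connectJ v w y : y \in 'N(G) ->
  connect (padj G) (v :^ y) (w :^ y) = connect (padj G) v w.
Proof.
suff connectJ1 v1 w1 z :
    z \in 'N(G) -> connect (padj G) v1 w1 -> connect (padj G) (v1 :^ z) (w1 :^ z).
  move=> yN; apply/idP/idP => [/(connectJ1 _ _ _ (groupVr yN)) | /connectJ1->//].
  by rewrite !conjsgK.
move=> zN /connectP[p p_path ->]; apply/connectP; exists [seq u :^ z | u <- p].
  by apply: homo_path p_path => u1 u2; rewrite padjJ.
by rewrite (last_map (fun u => u :^ z)).
Qed.

(* [Defs.pcomp] is qualified throughout because ssrfun also defines a [pcomp]. *)
Lemma mem_pcomp v w :
  w \in pverts G -> (w \in Defs.pcomp G v) = (Defs.pcomp G w == Defs.pcomp G v).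
Proof.
move=> wV; apply/idP/eqP => [ | <-]; last by rewrite inE wV connect0.
rewrite inE wV /= => vw; apply/setP => u.
by rewrite !inE (same_connect (sym_connect_sym padj_sym) vw).
Qed.

End PowerGraph.

Section Counting.
Local Open Scope group_scope.
Variables (n : nat) (G : {group {perm 'I_n}}) (T : seq nat).

Definition typed_verts := [set w in pverts G | vtype w == T].
Definition typed_comps := [set C in pcomps G | [exists v in C, vtype v == T]].

Lemma kC_pcompJ v y : y \in 'N(G) -> v \in pverts G ->
  kC (Defs.pcomp G (v :^ y)) T = kC (Defs.pcomp G v) T.
Proof.
move=> yN vV; rewrite /kC -[RHS](card_imset _ (@conjsg_inj _ y)); apply: eq_card => w.
rewrite -[w](conjsgKV y) (mem_imset _ _ (@conjsg_inj _ y)).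
rewrite !inE pvertsJ ?groupVr // connectJ ?groupVr //.
by case wV : (w :^ y^-1 \in pverts G); rewrite //= (vtypeJ _ wV).
Qed.

Lemma muT_typed_verts : T \in types0 G -> muT G T = (#|typed_verts| * totient (tord T))%N.
Proof.
case/imageP=> x0 x0G T_x0.
have ntriv x : x \in G -> ptype x = T -> x \in G^#.
  move=> xG xT; rewrite !inE xG andbT; apply: contraTneq x0G => x1.
  suff -> : x0 = 1 by rewrite !inE eqxx.
  by apply/eqP; rewrite -order_eq1 -tord_ptype -T_x0 -xT x1 tord_ptype order1.
rewrite /muT -sum_nat_const -sum1_card (partition_big (@pclass n) (mem typed_verts)); last first.
  by move=> x /setIdP[xG /eqP xT]; rewrite !inE vtype_pclass xT eqxx imset_f ?ntriv.
apply: eq_bigr => _ /setIdP[/imsetP[x xG ->]]; rewrite vtype_pclass => /eqP xT.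
rewrite -xT -card_pclass -sum1_card; apply: eq_bigl => z.
apply/andP/idP => [[_ /eqP <-] | zx]; first exact: pclass_id.
have xG' : x \in G by case/setD1P: xG.
by rewrite inE (subsetP (pclass_subG xG') _ zx) (ptype_pclass zx) (eq_pclass zx) !eqxx.
Qed.

Lemma typed_compsP C : C \in typed_comps ->
  exists2 x, x \in G^# /\ ptype x = T & C = Defs.pcomp G (pclass x).
Proof.
case/setIdP=> /imsetP[v vV ->] /exists_inP[w vw /eqP wT].
have wV : w \in pverts G by case/setIdP: vw.
case/imsetP: wV wT vw => x xG -> xT; rewrite mem_pcomp ?imset_f // => /eqP <-.
by exists x; rewrite -?vtype_pclass.
Qed.

Lemma isolated_kC v : type_isolated G T ->
  v \in pverts G -> vtype v = T -> kC (Defs.pcomp G v) T = 1%N.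
Proof.
move=> T_iso vV vT.
have no_adj w : ~~ padj G v w.
  apply/negP => /and4P[_ /imsetP[b0 b0G ->] ne_vw /exists_inP[a av /exists_inP[b bw ab]]].
  have aT : ptype a = T.
    by case/imsetP: vV vT av => a0 _ -> <-; rewrite vtype_pclass; apply: ptype_pclass.
  have bT : ptype b = ptype b0 := ptype_pclass bw.
  have [eT | neT] := eqVneq (ptype b0) T.
    have oab : #[a] = #[b] by rewrite -!tord_ptype aT bT eT.
    have cab : <[a]> = <[b]> by case/orP: ab => [/ppow_cycle-> // | /ppow_cycle <-].
    case/imsetP: vV ne_vw av => a0 _ -> ne_vw av.
    move/eqP: ne_vw; apply; rewrite -(eq_pclass av) -(eq_pclass bw).
    by apply/setP => z; rewrite !mem_pclass cab.
  have [not_pow not_root] := T_iso _ (image_f (@ptype n) b0G) neT.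
  case/orP: ab => /ptype_ppow[k].
    by rewrite aT bT => bk; apply: not_pow; exists k.
  by rewrite aT bT => ak; apply: not_root; exists k.
rewrite /kC -(cards1 v); apply: eq_card => w; rewrite !inE.
apply/idP/eqP => [/andP[/andP[_ /connectP[[|u p] /= vp ->]] _] // | ->].
  by rewrite (negbTE (no_adj u)) in vp.
by rewrite vV connect0 vT eqxx.
Qed.

Hypothesis G_fusion : fusion_controlled G.

Lemma kC_typed_comps C C' : C \in typed_comps -> C' \in typed_comps -> kC C T = kC C' T.
Proof.
case/typed_compsP=> x [xG xT] ->; case/typed_compsP=> x' [x'G x'T] ->.
have [z xz] : exists z, x ^ z = x' by apply: ptype_conjP; rewrite xT x'T.
have [y yN xy] : exists2 y, y \in 'N(G) & x ^ z = x ^ y.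
  by apply: G_fusion; rewrite ?xz; [case/setD1P: xG | case/setD1P: x'G].
by rewrite -xz xy pclassJ kC_pcompJ // imset_f.
Qed.

Lemma card_typed_verts C : C \in typed_comps -> #|typed_verts| = (ncompT G T * kC C T)%N.
Proof.
move=> CT; rewrite -sum_nat_const -sum1_card.
rewrite (partition_big (Defs.pcomp G) (mem typed_comps)); last first.
  move=> w /setIdP[wV wT]; rewrite !inE imset_f //=.
  by apply/exists_inP; exists w; rewrite // inE wV connect0.
apply: eq_bigr => C' C'T; rewrite (kC_typed_comps CT C'T) /kC -sum1_card.
apply: eq_bigl => w; case/setIdP: C'T => /imsetP[v vV ->] _.
rewrite !inE andbAC; case wV : (w \in pverts G) => //=.
by rewrite -mem_pcomp // inE wV.
Qed.

End Counting.

Theorem lemma6p6 (n : nat) (G : {group {perm 'I_n}}) (T : seq nat) :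
  fusion_controlled G -> T \in types0 G ->
  (forall C, C \in pcomps G -> [exists v in C, vtype v == T] ->
     ncompT G T * (totient (tord T) * kC C T) = muT G T)%N /\
  (type_isolated G T -> (ncompT G T * totient (tord T) = muT G T)%N).
Proof.
move=> G_fusion TG.
have count_typed C : C \in pcomps G -> [exists v in C, vtype v == T] ->
    (ncompT G T * (totient (tord T) * kC C T) = muT G T)%N.
  move=> CG CT; have CT' : C \in typed_comps G T by rewrite inE CG CT.
  by rewrite (muT_typed_verts TG) (card_typed_verts G_fusion CT') mulnAC mulnA.
split=> // T_iso; have [x0 x0G T_x0] := imageP TG.
have v0V : pclass x0 \in pverts G by apply: imset_f.
have v0T : vtype (pclass x0) = T by rewrite vtype_pclass T_x0.
rewrite -[X in (_ * X)%N]muln1 -(isolated_kC T_iso v0V v0T) count_typed ?imset_f //.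
by apply/exists_inP; exists (pclass x0); rewrite ?v0T // inE v0V connect0.
Qed.
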